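(* Let $n\geq 1$, let $T,T'$ be Jacobi subsets of $S_n$, and let $H\subseteq G$ be subgroups of $S_n$. Then: (1) If $T\cap T'=\emptyset$, then $T\cup T'$ is Jacobi. (2) $\sigma T=\{\sigma\circ\tau\mid \tau\in T\}$ is Jacobi for any $\sigma\in S_n$. (3) If $n\geq 2$, then $T(1,2)=\{\tau\circ(1,2)\mid\tau\in T\}$ is Jacobi, where $(1,2)\in S_n$ is the transposition. (4) If $n\leq m$, then $\iota_{n,m}(T)$ is a Jacobi subset of $S_m$. (5) If $H$ is Jacobi, then $G$ is Jacobi. (6) If $n\geq 2$ and $(1,2)\in G$, then $G$ is Jacobi. (7) If $n\geq 3$ and the $3$-cycle $(1,2,3)\in G$, then $G$ is Jacobi.
   Context: A Lie ring is a Lie algebra over $\mathbb Z$. The left-normed bracket is defined recursively by $[a_1]=a_1$ and $[a_1,\dots,a_n]=[[a_1,\dots,a_{n-1}],a_n]$. $S_n$ is the symmetric group on $\{1,\dots,n\}$, with product given by composition, $(\sigma\tau)(i)=\sigma(\tau(i))$. A subset $T\subseteq S_n$ is called Jacobi if $\sum_{\sigma\in T}[a_{\sigma(1)},\dots,a_{\sigma(n)}]=0$ for all elements $a_1,\dots,a_n$ of every Lie ring. For $n\leq m$, $\iota_{n,m}:S_n\hookrightarrow S_m$ is the canonical embedding (permutations of $\{1,\dots,n\}$ extended by fixing $n+1,\dots,m$). *)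

From HB Require Import structures.
From mathcomp Require Import all_boot all_order all_algebra all_fingroup.
Set Implicit Arguments. Unset Strict Implicit. Unset Printing Implicit Defensive.
Import GRing.Theory.
Local Open Scope ring_scope.

(* A Lie ring: an abelian group with a biadditive, alternating bracket
   satisfying the Jacobi identity (i.e. a Lie algebra over Z). *)
Record lie_ring := LieRing {
  lr_car :> zmodType;
  lr_br : lr_car -> lr_car -> lr_car;
  lr_brDl : forall x y z : lr_car, lr_br (x + y) z = lr_br x z + lr_br y z;
  lr_brDr : forall x y z : lr_car, lr_br x (y + z) = lr_br x y + lr_br x z;
  lr_brxx : forall x : lr_car, lr_br x x = 0;
  lr_jacobi : forall x y z : lr_car,
    lr_br (lr_br x y) z + lr_br (lr_br y z) x + lr_br (lr_br z x) y = 0 }.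

(* Left-normed bracket [a_1, ..., a_k] = [[a_1,...,a_{k-1}],a_k]; [a_1] = a_1.
   (The empty bracket, never used for n >= 1, is set to 0.) *)
Definition lnbr (L : lie_ring) (s : seq L) : L :=
  if s is x :: s' then foldl (@lr_br L) x s' else 0.

(* Index i : 'I_n stands for the paper's i+1. *)
Definition jacobi (n : nat) (T : {set {perm 'I_n}}) : Prop :=
  forall (L : lie_ring) (a : 'I_n -> L),
    \sum_(s in T) lnbr [seq a (s i) | i <- enum 'I_n] = 0.

(* Composition sigma o tau, i.e. (perm_comp sigma tau) i = sigma (tau i).
   (Note mathcomp's product is (s * t) x = t (s x).) *)
Definition perm_comp (T : finType) (s t : {perm T}) : {perm T} := (t * s)%g.

Lemma perm_compE (T : finType) (s t : {perm T}) x : perm_comp s t x = s (t x).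
Proof. by rewrite /perm_comp permM. Qed.

Definition ext_fun (n m : nat) (H : (n <= m)%N) (s : {perm 'I_n}) (i : 'I_m) : 'I_m :=
  if (insub (val i) : option 'I_n) is Some j then widen_ord H (s j) else i.

Lemma ext_fun_inj (n m : nat) (H : (n <= m)%N) (s : {perm 'I_n}) : injective (@ext_fun n m H s).
Proof.
move=> i j; rewrite /ext_fun.
case: insubP => [i' Hi Ei|Hi]; case: insubP => [j' Hj Ej|Hj].
- move/(congr1 val)=> /= /val_inj /perm_inj Eij.
  by apply: val_inj; rewrite -Ei -Ej Eij.
- by move=> E; move: Hj; rewrite -E /= ltn_ord.
- by move=> E; move: Hi; rewrite E /= ltn_ord.
- by [].
Qed.

Definition iota_perm (n m : nat) (H : (n <= m)%N) (s : {perm 'I_n}) : {perm 'I_m} :=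
  perm (@ext_fun_inj n m H s).

From HB Require Import structures.
From mathcomp Require Import all_boot all_order all_algebra all_fingroup.
From mathcomp Require Import cyclic.
Set Implicit Arguments. Unset Strict Implicit. Unset Printing Implicit Defensive.
Import GRing.Theory.
Local Open Scope group_scope.

(* Write [a]_s for the monomial [a_{s(1)}, ..., a_{s(n)}], so that T is Jacobi
   when the monomials indexed by T sum to 0.  Left composition by sigma only
   relabels the a_i, and right composition by (1,2) swaps the first two
   arguments of the innermost bracket, i.e. negates the monomial.  The
   embedding iota_{n,m} applies the same brackets with a_{n+1}, ..., a_m to
   every monomial.  A group G containing a Jacobi subgroup H is a disjoint
   union of right cosets H g, and the monomials over H g are those over H with
   the a_i relabelled by g.  Finally the cyclic groups generated by (1,2) and
   by (1,2,3) are Jacobi by anticommutativity and by the Jacobi identity. *)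

Section LieRingFacts.
Variable L : lie_ring.
Local Notation br := (@lr_br L).
Local Open Scope ring_scope.

Lemma lr_br0l (y : L) : br 0 y = 0.
Proof. by apply: (addrI (br 0 y)); rewrite -lr_brDl !addr0. Qed.

Lemma lr_brNl (x y : L) : br (- x) y = - br x y.
Proof. by apply: (addrI (br x y)); rewrite -lr_brDl !subrr lr_br0l. Qed.

Lemma lr_brC (x y : L) : br y x = - br x y.
Proof.
have := lr_brxx (x + y).
rewrite lr_brDl !lr_brDr !lr_brxx add0r addr0 => Exy.
by apply: (addrI (br x y)); rewrite Exy subrr.
Qed.

Lemma foldl_brD (r : seq L) (x y : L) :
  foldl br (x + y) r = foldl br x r + foldl br y r.
Proof. by elim: r x y => //= z r IHr x y; rewrite lr_brDl IHr. Qed.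

Lemma foldl_br0 (r : seq L) : foldl br 0 r = 0.
Proof. by elim: r => //= z r IHr; rewrite lr_br0l. Qed.

Lemma foldl_brN (r : seq L) (x : L) : foldl br (- x) r = - foldl br x r.
Proof. by elim: r x => //= z r IHr x; rewrite lr_brNl IHr. Qed.

Lemma foldl_br_sum (I : finType) (A : {pred I}) (F : I -> L) (r : seq L) :
  foldl br (\sum_(i in A) F i) r = \sum_(i in A) foldl br (F i) r.
Proof. exact: (big_morph (foldl br ^~ r) (foldl_brD r) (foldl_br0 r)). Qed.

Lemma lnbr_cat (s r : seq L) : s != [::] -> lnbr (s ++ r) = foldl br (lnbr s) r.
Proof. by case: s => // x s _; rewrite /= foldl_cat. Qed.

End LieRingFacts.

Lemma val_take_enum_ord n k : k <= n -> map val (take k (enum 'I_n)) = iota 0 k.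
Proof. by move=> le_kn; rewrite map_take val_enum_ord take_iota (minn_idPl le_kn). Qed.

Lemma take_enum_ord n k (le_kn : k <= n) :
  take k (enum 'I_n) = map (widen_ord le_kn) (enum 'I_k).
Proof.
by apply: (inj_map val_inj); rewrite val_take_enum_ord // -map_comp val_enum_ord.
Qed.

Lemma take2_enum_ord n (h : 1 < n) :
  take 2 (enum 'I_n) = [:: Ordinal (ltnW h); Ordinal h].
Proof. by apply: (inj_map val_inj); rewrite val_take_enum_ord. Qed.

Lemma take3_enum_ord n (h : 2 < n) :
  take 3 (enum 'I_n) = [:: Ordinal (ltnW (ltnW h)); Ordinal (ltnW h); Ordinal h].
Proof. by apply: (inj_map val_inj); rewrite val_take_enum_ord. Qed.

Lemma mem_drop_enum_ord n k (i : 'I_n) : i \in drop k (enum 'I_n) -> k <= i.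
Proof.
move/(map_f val); rewrite map_drop val_enum_ord drop_iota mem_iota add0n.
by case/andP.
Qed.

Lemma big_cycle (V : nmodType) (gT : finGroupType) (x : gT) (F : gT -> V) :
  (\sum_(y in <[x]>%g) F y = \sum_(i < #[x]%g) F (x ^+ i)%g)%R.
Proof.
have -> : <[x]> = [set x ^+ i | i : 'I_#[x]].
  apply/setP => y; apply/idP/imsetP => [/cyclePmin[i lt_ix ->]|[i _ ->]].
    by exists (Ordinal lt_ix).
  exact: mem_cycle.
rewrite big_imset // => i j _ _ /eqP.
by rewrite eq_expg_mod_order !modn_small // => /eqP /val_inj.
Qed.

Definition monomial (L : lie_ring) n (a : 'I_n -> L) (s : {perm 'I_n}) : L :=
  lnbr [seq a (s i) | i <- enum 'I_n].

Lemma jacobiE n (T : {set {perm 'I_n}}) :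
  jacobi T = forall (L : lie_ring) (a : 'I_n -> L),
    (\sum_(s in T) monomial a s = 0)%R.
Proof. by []. Qed.

Section Monomials.
Variable L : lie_ring.
Local Notation br := (@lr_br L).

Lemma monomial_comp n (a : 'I_n -> L) (s t : {perm 'I_n}) :
  monomial a (perm_comp s t) = monomial (a \o s) t.
Proof. by congr lnbr; apply: eq_map => i; rewrite perm_compE. Qed.

Lemma monomial_fixed_tail n k (a : 'I_n -> L) (p : {perm 'I_n}) :
    0 < k <= n -> (forall i : 'I_n, k <= i -> p i = i) ->
  monomial a p =
    foldl br (lnbr [seq a (p i) | i <- take k (enum 'I_n)])
             (drop k [seq a i | i <- enum 'I_n]).
Proof.
case/andP=> k_gt0 le_kn fix_p.
rewrite /monomial -{1}(cat_take_drop k (enum 'I_n)) map_cat lnbr_cat; last first.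
  by rewrite -size_eq0 size_map size_takel ?size_enum_ord // -lt0n.
rewrite -map_drop; congr (foldl _ _ _); apply/eq_in_map => i /mem_drop_enum_ord.
by move/fix_p ->.
Qed.

Lemma iota_permW n m (le_nm : n <= m) (s : {perm 'I_n}) (i : 'I_n) :
  iota_perm le_nm s (widen_ord le_nm i) = widen_ord le_nm (s i).
Proof. by rewrite permE /ext_fun /= valK. Qed.

Lemma iota_perm_id n m (le_nm : n <= m) (s : {perm 'I_n}) (i : 'I_m) :
  n <= i -> iota_perm le_nm s i = i.
Proof. by move=> le_ni; rewrite permE /ext_fun insubN // -leqNgt. Qed.

Lemma monomial_iota_perm n m (n_gt0 : 0 < n) (le_nm : n <= m)
    (a : 'I_m -> L) (s : {perm 'I_n}) :
  monomial a (iota_perm le_nm s) =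
    foldl br (monomial (a \o widen_ord le_nm) s) (drop n [seq a i | i <- enum 'I_m]).
Proof.
rewrite (@monomial_fixed_tail _ n) ?n_gt0 //; last exact: iota_perm_id.
rewrite (take_enum_ord le_nm) -map_comp; congr (foldl _ (lnbr _) _).
by apply: eq_map => i /=; rewrite iota_permW.
Qed.

Section Transposition01.
Variables (n : nat) (h : 1 < n).
Local Notation t := (tperm (Ordinal (ltnW h)) (Ordinal h)).

Lemma tperm01_fixed (i : 'I_n) : 1 < i -> t i = i.
Proof.
by move=> i_gt1; rewrite tpermD //; apply: contraTneq i_gt1 => <-.
Qed.

Lemma order_tperm01 : #[t] = 2.
Proof.
apply: nt_prime_order => //; first by rewrite expgS expg1 tperm2.
by apply/eqP => /permP/(_ (Ordinal h)); rewrite tpermR perm1 => /(congr1 val).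
Qed.

Lemma monomial_tperm01 (a : 'I_n -> L) : monomial a t = (- monomial a 1)%R.
Proof.
have k2 : 0 < 2 <= n by rewrite h.
rewrite !(monomial_fixed_tail _ k2) ?take2_enum_ord /=; last 2 first.
- by move=> i _; rewrite perm1.
- exact: tperm01_fixed.
by rewrite tpermL tpermR !perm1 lr_brC foldl_brN.
Qed.

Lemma monomial_comp_tperm01 (a : 'I_n -> L) (s : {perm 'I_n}) :
  monomial a (perm_comp s t) = (- monomial a s)%R.
Proof. by rewrite monomial_comp monomial_tperm01 -monomial_comp /perm_comp mul1g. Qed.

End Transposition01.

Section Cycle123.
Variables (n : nat) (h : 2 < n).
Local Notation o0 := (Ordinal (ltnW (ltnW h))).
Local Notation o1 := (Ordinal (ltnW h)).
Local Notation o2 := (Ordinal h).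

Lemma ord3_cases (i : 'I_n) : [\/ i = o0, i = o1, i = o2 | 2 < i].
Proof.
case: i => [[|[|[|k]]] lt_in]; [apply: Or41|apply: Or42|apply: Or43|apply: Or44] => //;
exact: val_inj.
Qed.

Lemma tperm_comp_cycle123 (c := perm_comp (tperm o0 o2) (tperm o0 o1)) :
  [/\ c o0 = o1, c o1 = o2, c o2 = o0 & forall i : 'I_n, 2 < i -> c i = i].
Proof.
rewrite {}/c; split; rewrite ?perm_compE.
- by rewrite tpermL tpermD // -val_eqE.
- by rewrite tpermR tpermL.
- by rewrite [tperm o0 o1 o2]tpermD ?tpermR // -val_eqE.
by move=> i i_gt2; rewrite perm_compE !tpermD //; apply: contraTneq i_gt2 => <-.
Qed.

Variable c : {perm 'I_n}.
Hypotheses (c_o0 : c o0 = o1) (c_o1 : c o1 = o2) (c_o2 : c o2 = o0).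
Hypothesis c_fixed : forall i : 'I_n, 2 < i -> c i = i.

Lemma order_cycle123 : #[c] = 3.
Proof.
apply: nt_prime_order => //.
  apply/permP => i; rewrite perm1 !expgS expg0 mulg1 !permM.
  case: (ord3_cases i) => [->|->|->|/c_fixed ci];
  by rewrite ?ci ?(c_o0, c_o1, c_o2).
by apply/eqP => /permP/(_ o0); rewrite c_o0 perm1 => /(congr1 val).
Qed.

Lemma monomial_cycle123 (a : 'I_n -> L) :
  (monomial a 1 + monomial a c + monomial a (c ^+ 2) = 0)%R.
Proof.
have k3 : 0 < 3 <= n by rewrite h.
rewrite !(monomial_fixed_tail _ k3) ?take3_enum_ord /=; last 3 first.
- by move=> i i_gt2; rewrite expgS expg1 permM !c_fixed.
- exact: c_fixed.
- by move=> i _; rewrite perm1.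
rewrite expgS expg1 !permM !perm1 c_o0 c_o1 c_o2 c_o0.
by rewrite -!foldl_brD lr_jacobi foldl_br0.
Qed.

End Cycle123.

End Monomials.

Lemma jacobiU n (T T' : {set {perm 'I_n}}) :
  jacobi T -> jacobi T' -> T :&: T' = set0 -> jacobi (T :|: T').
Proof.
rewrite !jacobiE => HT HT' disjTT' L a.
rewrite (eq_bigl [predU T & T']) => [|s]; last by rewrite !inE.
by rewrite bigU /= ?HT ?HT' ?addr0 // -setI_eq0 disjTT'.
Qed.

Lemma jacobi_comp n (T : {set {perm 'I_n}}) (sigma : {perm 'I_n}) :
  jacobi T -> jacobi [set perm_comp sigma tau | tau in T].
Proof.
rewrite !jacobiE => HT L a; rewrite big_imset /=; last by move=> s t _ _ /mulIg.
under eq_bigr do rewrite monomial_comp.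
exact: HT.
Qed.

Lemma jacobi_comp_tperm01 n (h : 1 < n) (T : {set {perm 'I_n}}) :
  jacobi T ->
  jacobi [set perm_comp tau (tperm (Ordinal (ltnW h)) (Ordinal h)) | tau in T].
Proof.
rewrite !jacobiE => HT L a; rewrite big_imset /=; last by move=> s t _ _ /mulgI.
under eq_bigr do rewrite monomial_comp_tperm01.
by rewrite sumrN HT oppr0.
Qed.

Lemma jacobi_iota_perm n m (n_gt0 : 0 < n) (le_nm : n <= m)
    (T : {set {perm 'I_n}}) :
  jacobi T -> jacobi [set iota_perm le_nm tau | tau in T].
Proof.
rewrite !jacobiE => HT L a; rewrite big_imset /=; last first.
  move=> s t _ _ /permP Est; apply/permP => i; apply: val_inj.
  by have := Est (widen_ord le_nm i); rewrite !iota_permW => /(congr1 val).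
under eq_bigr do rewrite monomial_iota_perm //.
by rewrite -foldl_br_sum HT foldl_br0.
Qed.

Lemma jacobiS n (H G : {group {perm 'I_n}}) : H \subset G -> jacobi H -> jacobi G.
Proof.
rewrite !jacobiE => sHG HH L a.
rewrite (set_partition_big _ (rcosets_partition sHG)) /=.
apply: big1 => _ /rcosetsP[g _ ->]; rewrite -rcosetE /rcoset.
rewrite big_imset /=; last by move=> s t _ _ /mulIg.
under eq_bigr do rewrite -[_ * g]/(perm_comp g _) monomial_comp.
exact: HH.
Qed.

Lemma jacobi_cycle_tperm01 n (h : 1 < n) :
  jacobi <[tperm (Ordinal (ltnW h)) (Ordinal h)]>.
Proof.
rewrite jacobiE => L a.
by rewrite big_cycle order_tperm01 !big_ord_recl big_ord0 /= monomial_tperm01 addr0 addrN.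
Qed.

Lemma jacobi_cycle123 n (h : 2 < n) (c : {perm 'I_n}) :
    c (Ordinal (ltnW (ltnW h))) = Ordinal (ltnW h) ->
    c (Ordinal (ltnW h)) = Ordinal h ->
    c (Ordinal h) = Ordinal (ltnW (ltnW h)) ->
    (forall i : 'I_n, 2 < i -> c i = i) ->
  jacobi <[c]>.
Proof.
rewrite jacobiE => c_o0 c_o1 c_o2 c_fixed L a.
rewrite big_cycle (order_cycle123 c_o0 c_o1 c_o2 c_fixed).
rewrite !big_ord_recl big_ord0 /= addr0 addrA.
exact: monomial_cycle123.
Qed.

Theorem lemma1 (n : nat) (hn : 0 < n) (T T' : {set {perm 'I_n}})
    (H G : {group {perm 'I_n}}) :
  jacobi T -> jacobi T' -> H \subset G ->
  (* (1) *)
  (T :&: T' = set0 -> jacobi (T :|: T')) /\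
  (* (2) *)
  (forall sigma : {perm 'I_n}, jacobi [set perm_comp sigma tau | tau in T]) /\
  (* (3) T(1,2); indices 0,1 here are the paper's 1,2 *)
  (forall h : 1 < n,
     jacobi [set perm_comp tau (tperm (Ordinal (ltnW h)) (Ordinal h)) | tau in T]) /\
  (* (4) *)
  (forall (m : nat) (hm : n <= m), jacobi [set iota_perm hm tau | tau in T]) /\
  (* (5) *)
  (jacobi H -> jacobi G) /\
  (* (6) *)
  (forall h : 1 < n, tperm (Ordinal (ltnW h)) (Ordinal h) \in G -> jacobi G) /\
  (* (7) the 3-cycle (1,2,3) = (1,3) o (1,2) *)
  (forall h : 2 < n,
     perm_comp (tperm (Ordinal (ltnW (ltnW h))) (Ordinal h))
           (tperm (Ordinal (ltnW (ltnW h))) (Ordinal (ltnW h))) \in G ->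
     jacobi G).
Proof.
move=> HT HT' sHG; split; first exact: jacobiU.
split; first by move=> sigma; exact: jacobi_comp.
split; first by move=> h; exact: jacobi_comp_tperm01.
split; first by move=> m hm; exact: jacobi_iota_perm.
split; first exact: jacobiS.
split.
  move=> h tG; apply: jacobiS (jacobi_cycle_tperm01 h).
  by rewrite cycle_subG.
move=> h cG; have [c_o0 c_o1 c_o2 c_fixed] := tperm_comp_cycle123 h.
apply: jacobiS (jacobi_cycle123 c_o0 c_o1 c_o2 c_fixed).
by rewrite cycle_subG.
Qed.
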